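(* Let $\varrho\ge1$ and $K\ge 4\varrho+1$ be integers, and consider a configuration satisfying $WU_0$ (for clocks with values in $\{0,\dots,K-1\}$). Let $p,q$ be processes with $d(p,q)\le 2\varrho$, and let $a=p.r$, $b=q.r$. Then the intrinsic delay satisfies $\delta_{(p,q)}=\overline{b-a}$ if $0\le\overline{b-a}\le 2\varrho$, and $\delta_{(p,q)}=-\overline{a-b}$ otherwise.
   Context: Let $G=(V,E)$ be a finite connected undirected graph with hop distance $d$. For an integer $a$, $\bar a\in\{0,\dots,K-1\}$ is its residue modulo $K$. Each process $p$ holds a clock $p.r\in\{0,\dots,K-1\}$. Integers $a,b$ are locally comparable if $\min(\overline{a-b},\overline{b-a})\le1$, and then $b\ominus a=\overline{b-a}$ if $\overline{b-a}\le1$, and $b\ominus a=-\overline{a-b}$ otherwise. A configuration satisfies $WU$ if for every edge $\{p,q\}$, $p.r$ and $q.r$ are locally comparable. The delay of a path $\mu=p_0p_1\ldots p_k$ is $\delta_\mu=\sum_{i=0}^{k-1}(p_{i+1}.r\ominus p_i.r)$ ($0$ if $k=0$). A configuration satisfies $WU_0$ if it satisfies $WU$ and for all $p,q$ all paths from $p$ to $q$ have the same delay, denoted $\delta_{(p,q)}$ (the intrinsic delay). *)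

From mathcomp Require Import all_boot all_order all_algebra.
Set Implicit Arguments. Unset Strict Implicit. Unset Printing Implicit Defensive.
Import Order.TTheory GRing.Theory Num.Theory.
Local Open Scope ring_scope.

Definition res (K : nat) (a : int) : int := (a %% K%:Z)%Z.

Definition loc_comp (K : nat) (a b : int) : bool :=
  (res K (a - b) <= 1) || (res K (b - a) <= 1).

Definition ominus (K : nat) (b a : int) : int :=
  if res K (b - a) <= 1 then res K (b - a) else - res K (a - b).

Definition clk (V : Type) (K : nat) (r : V -> 'I_K) (p : V) : int := (nat_of_ord (r p))%:Z.

Definition WU (V : Type) (e : rel V) (K : nat) (r : V -> 'I_K) : Prop :=
  forall p q, e p q -> loc_comp K (clk r p) (clk r q).

Fixpoint delay (V : Type) (K : nat) (r : V -> 'I_K) (x : V) (s : seq V) : int :=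
  match s with
  | [::] => 0
  | y :: s' => ominus K (clk r y) (clk r x) + delay r y s'
  end.

Definition is_path (V : eqType) (e : rel V) (x y : V) (s : seq V) : bool :=
  path e x s && (last x s == y).

Definition WU0 (V : eqType) (e : rel V) (K : nat) (r : V -> 'I_K) : Prop :=
  WU e r /\
  forall p q s1 s2, is_path e p q s1 -> is_path e p q s2 ->
    delay r p s1 = delay r p s2.

(* hop distance d(p,q) <= k: there is a path from p to q with at most k edges *)
Definition dist_le (V : eqType) (e : rel V) (k : nat) (p q : V) : Prop :=
  exists s, is_path e p q s /\ (size s <= k)%N.

From mathcomp Require Import all_boot all_order all_algebra.
From mathcomp Require Import zify.
Import Order.TTheory GRing.Theory Num.Theory.
Local Open Scope ring_scope.

(* Every step of a path in a WU configuration contributes a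
   local delay in {-1, 0, 1} that is congruent modulo K to the difference of
   the two clocks.  Hence the delay D of any path from p to q satisfies
   |D| <= length of the path and D = b - a (mod K).  For a shortest path
   (length <= 2 rho) we get |D| <= 2 rho < K / 2, and such a D is uniquely
   recovered from the residues of b - a and a - b: it equals res (b - a) when
   D >= 0, while for D < 0 the residue of b - a is K + D > 2 rho and
   res (a - b) = -D.  Under WU_0 every path from p to q has the same delay, so
   the formula holds for all of them. *)

Section Residues.

Variable K : nat.
Hypothesis K_gt0 : (0 < K)%N.

Lemma res_bounds (t : int) : 0 <= res K t < K%:Z.
Proof. by rewrite /res modz_ge0 ?ltz_pmod ?ltz_nat // eqz_nat -lt0n. Qed.

Lemma res_congr (t : int) : exists m : int, res K t = t + m * K%:Z.
Proof.
exists (- (t %/ K%:Z)%Z); rewrite /res {2}(divz_eq t K%:Z) mulNr.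
by rewrite addrC addKr.
Qed.

Lemma ominus_congr (y z : int) : loc_comp K z y ->
  `|ominus K y z| <= 1 /\ exists m : int, ominus K y z = y - z + m * K%:Z.
Proof.
rewrite /loc_comp /ominus => comp_zy; case: ifP => small_yz.
  have /andP[res_ge0 _] := res_bounds (y - z).
  by split; [rewrite ger0_norm | exact: res_congr].
have small_zy : res K (z - y) <= 1 by move: comp_zy; rewrite small_yz orbF.
have /andP[res_ge0 _] := res_bounds (z - y).
split; first by rewrite normrN ger0_norm.
have [m ->] := res_congr (z - y); exists (- m).
by rewrite opprD opprB mulNr.
Qed.

Lemma delay_congr (V : eqType) (e : rel V) (r : V -> 'I_K) :
  WU e r -> forall (s : seq V) (x : V), path e x s ->
  `|delay r x s| <= (size s)%:R /\
  exists m : int, delay r x s = clk r (last x s) - clk r x + m * K%:Z.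
Proof.
move=> hWU; elim=> [|y s IH] x /=.
  by move=> _; split => //; exists 0; rewrite mul0r addr0 subrr.
move=> /andP[exy path_ys]; have [bound_s [m hm]] := IH _ path_ys.
have [bound_step [n hn]] := @ominus_congr (clk r y) (clk r x) (hWU _ _ exy).
split.
  apply: le_trans (ler_normD _ _) _.
  by rewrite -addn1 natrD addrC lerD.
exists (n + m); rewrite hn hm mulrDl addrACA; congr (_ + _).
by rewrite addrC addrA subrK.
Qed.

Lemma small_from_res (R D t : int) : R + R < K%:Z -> `|D| <= R ->
  (exists m : int, t = m * K%:Z + D) ->
  D = if (0 <= res K t) && (res K t <= R) then res K t else - res K (- t).
Proof.
move=> RK; rewrite ler_norml => /andP[D_ge D_le] [m ->].
have -> : - (m * K%:Z + D) = (- m) * K%:Z + (- D) by rewrite opprD mulNr.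
rewrite /res !modzMDl.
have [D_ge0 | D_lt0] := leP 0 D.
  by rewrite modz_small ?D_ge0 ?D_le //=; lia.
have -> : (D %% K%:Z)%Z = K%:Z + D.
  by rewrite -(modzDl D K%:Z) modz_small //; apply/andP; split; lia.
have -> : ((- D) %% K%:Z)%Z = - D by rewrite modz_small //; apply/andP; split; lia.
have -> : (0 <= K%:Z + D) && (K%:Z + D <= R) = false by lia.
by rewrite opprK.
Qed.

End Residues.

Theorem mainTheorem7 (V : finType) (e : rel V)
    (e_sym : symmetric e) (e_irr : irreflexive e)
    (e_conn : forall p q : V, connect e p q)
    (rho K : nat) (rho_ge1 : (1 <= rho)%N) (K_ge : (4 * rho + 1 <= K)%N)
    (r : V -> 'I_K) (hWU0 : WU0 e r)
    (p q : V) (hd : dist_le e (2 * rho) p q) :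
  let a := clk r p in
  let b := clk r q in
  forall s, is_path e p q s ->
    delay r p s =
      (if (0 <= res K (b - a)) && (res K (b - a) <= (2 * rho)%:Z)
       then res K (b - a) else - res K (a - b)).
Proof.
move=> a b s path_s.
have K_gt0 : (0 < K)%N by lia.
have [hWU same_delay] := hWU0.
have [s0 [path_s0 size_s0]] := hd.
rewrite (same_delay _ _ _ _ path_s path_s0) -[a - b]opprB.
have /andP[path0 /eqP last0] := path_s0.
have [bound [m congr0]] := @delay_congr K K_gt0 _ e r hWU _ _ path0.
apply: (@small_from_res K K_gt0) => //.
- lia.
- by apply: le_trans bound _; rewrite natz lez_nat.
- by exists (- m); rewrite congr0 last0 mulNr addrCA addNr addr0.
Qed.
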